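(* Let $A: E\supseteq D(A)\to E$ be a densely defined, closed, real linear operator on a complex Banach lattice $E$. Let $u\in E_+$ and let $\varphi\in E'$ be strictly positive. If there exists a real $\mu_0\in\rho(A)$ with $-u\otimes\varphi\preceq R(\mu_0,A)\preceq u\otimes\varphi$, then $-u\otimes\varphi\preceq R(\mu,A)^n\preceq u\otimes\varphi$ for all real $\mu\in\rho(A)$ and all $n\in\mathbb{N}$.
   Context: A linear operator $A$ is real if $D(A) = (D(A)\cap E_{\mathbb{R}}) + i(D(A)\cap E_{\mathbb{R}})$ and $A$ maps $D(A)\cap E_{\mathbb{R}}$ into $E_{\mathbb{R}}$, where $E_{\mathbb{R}}$ is the real part of $E$. $R(\mu,A)=(\mu-A)^{-1}$. $\varphi$ strictly positive: $\langle\varphi,f\rangle>0$ for all $0\ne f\in E_+$. $u\otimes\varphi$ is $f\mapsto\langle\varphi,f\rangle u$. For bounded real operators, $T\succeq S$ (equivalently $S\preceq T$) means $T-cS$ maps $E_+$ into $E_+$ for some $c>0$. *)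

From HB Require Import structures.
From mathcomp Require Import all_boot all_order all_algebra.
From mathcomp Require Import all_classical all_reals all_analysis.
From mathcomp Require Import complex.
Set Implicit Arguments. Unset Strict Implicit. Unset Printing Implicit Defensive.
Import Order.TTheory GRing.Theory Num.Theory.
Import numFieldNormedType.Exports.
Local Open Scope classical_set_scope.
Local Open Scope ring_scope.
Local Open Scope complex_scope.

Section BanachLattice.
Variables (R : realType) (E : completeNormedModType R).

(** The real Banach lattice E_R = E, whose lattice structure is given by a
    join operation [join]; the order is  x <= y  :<->  join x y = y. *)
Definition lat_le (join : E -> E -> E) (x y : E) : Prop := join x y = y.
Definition lat_abs (join : E -> E -> E) (x : E) : E := join x (- x).

Definition banach_lattice (join : E -> E -> E) : Prop :=
  [/\ (forall x y, join x y = join y x),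
      (forall x y z, join x (join y z) = join (join x y) z) /\
      (forall x, join x x = x),
      (forall x y z, lat_le join x y -> lat_le join (x + z) (y + z)),
      (forall (a : R) x, 0 <= a -> lat_le join 0 x -> lat_le join 0 (a *: x))
    & (forall x y, lat_le join (lat_abs join x) (lat_abs join y) -> `|x| <= `|y|)].

(** The complex Banach lattice E_C = E_R + i E_R, modelled as pairs (x, y)
    standing for x + i y, with the (equivalent) product norm. *)
Definition cscale (z : R[i]) (p : E * E) : E * E :=
  (complex.Re z *: p.1 - complex.Im z *: p.2, complex.Re z *: p.2 + complex.Im z *: p.1).

Definition csubspace (D : set (E * E)) : Prop :=
  [/\ D 0, (forall p q, D p -> D q -> D (p + q))
    & (forall z p, D p -> D (cscale z p))].

Definition clinear_on (D : set (E * E)) (A : E * E -> E * E) : Prop :=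
  csubspace D /\
  (forall p q, D p -> D q -> A (p + q) = A p + A q) /\
  (forall z p, D p -> A (cscale z p) = cscale z (A p)).

Definition densely_defined (D : set (E * E)) : Prop := closure D = setT.

Definition closed_op (D : set (E * E)) (A : E * E -> E * E) : Prop :=
  closed [set pq : (E * E) * (E * E) | D pq.1 /\ pq.2 = A pq.1].

Definition real_op (D : set (E * E)) (A : E * E -> E * E) : Prop :=
  (forall x y, D (x, y) <-> (D (x, 0) /\ D (y, 0))) /\
  (forall x, D (x, 0) -> (A (x, 0)).2 = 0).

Definition bounded_op (B : E * E -> E * E) : Prop :=
  clinear_on setT B /\ exists M : R, forall p, `|B p| <= M * `|p|.

Definition is_resolvent (D : set (E * E)) (A : E * E -> E * E)
  (mu : R[i]) (B : E * E -> E * E) : Prop :=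
  bounded_op B /\
  (forall p, D (B p) /\ cscale mu (B p) - A (B p) = p) /\
  (forall f, D f -> B (cscale mu f - A f) = f).

Definition in_resolvent_set D A (mu : R[i]) : Prop :=
  exists B, is_resolvent D A mu B.

Definition in_dual (phi : E * E -> R[i]) : Prop :=
  (forall p q, phi (p + q) = phi p + phi q) /\
  (forall z p, phi (cscale z p) = z * phi p) /\
  (exists M : R, forall p, `|phi p| <= (M * `|p|)%:C).

(** E_+ = positive cone of E_R, seen inside E_C *)
Definition strictly_positive (join : E -> E -> E) (phi : E * E -> R[i]) : Prop :=
  forall f, lat_le join 0 f -> f <> 0 -> 0 < phi (f, 0).

Definition tensor (u : E) (phi : E * E -> R[i]) (p : E * E) : E * E :=
  cscale (phi p) (u, 0).

Definition opp_op (S : E * E -> E * E) (p : E * E) : E * E := - S p.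

Definition op_succeq (join : E -> E -> E) (T S : E * E -> E * E) : Prop :=
  exists c : R, 0 < c /\
    forall f, lat_le join 0 f ->
      let p := T (f, 0) - c *: S (f, 0) in p.2 = 0 /\ lat_le join 0 p.1.

End BanachLattice.

(* Put k = mu0 - mu and V = I + k R(mu).  The resolvent identity gives
   R(mu) = R(mu0) V = V R(mu0), hence R(mu) = R(mu0) + R(mu0) (k V) R(mu0) and
   R(mu)^(n+2) = R(mu0) (V R(mu)^n V) R(mu0); for real mu the middle factors
   are bounded and leave E_R invariant.  The hypothesis on R(mu0) says that
   -K <phi,f> u <= R(mu0) f <= K <phi,f> u for f >= 0.  Splitting a real h as
   h^+ - h^- and bounding <phi,h^+-> by ||h|| puts R(mu0) h in the order
   interval [-C ||h|| u, C ||h|| u], so for a bounded real W the element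
   R(mu0) W R(mu0) f lies between -+ C ||W|| K ||u|| <phi,f> u. *)

From Pilot Require Import Defs.
From HB Require Import structures.
From mathcomp Require Import all_boot all_order all_algebra.
From mathcomp Require Import all_classical all_reals all_analysis.
From mathcomp Require Import complex ring.
Import Order.TTheory GRing.Theory Num.Theory.
Local Open Scope ring_scope.
Local Open Scope complex_scope.
Set Implicit Arguments. Unset Strict Implicit. Unset Printing Implicit Defensive.

Section LatticeOrder.
Variables (R : realType) (E : completeNormedModType R) (join : E -> E -> E).
Hypothesis lattice : banach_lattice join.
Local Notation le := (lat_le join).

Lemma lat_le_refl x : le x x.
Proof. by case: lattice => _ [_ joinxx] _ _ _; apply: joinxx. Qed.

Lemma lat_le_trans y x z : le x y -> le y z -> le x z.
Proof. by case: lattice => _ [joinA _] _ _ _; rewrite /lat_le => xy yz; rewrite -yz joinA xy. Qed.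

Lemma lat_le_anti x y : le x y -> le y x -> x = y.
Proof. by case: lattice => joinC _ _ _ _; rewrite /lat_le => xy yx; rewrite -xy -{1}yx joinC. Qed.

Lemma lat_leD2r z x y : le x y -> le (x + z) (y + z).
Proof. by case: lattice => _ _ leD _ _; apply: leD. Qed.

Lemma lat_subr_ge0 x y : le 0 (y - x) <-> le x y.
Proof.
split=> [|xy]; first by move/(lat_leD2r x); rewrite add0r subrK.
by have := lat_leD2r (- x) xy; rewrite subrr.
Qed.

Lemma lat_leD x y z t : le x y -> le z t -> le (x + z) (y + t).
Proof.
move=> xy zt; apply: (lat_le_trans (lat_leD2r z xy)).
by rewrite ![y + _]addrC; apply: lat_leD2r.
Qed.

Lemma lat_leN2 x y : le x y -> le (- y) (- x).
Proof. by move/lat_subr_ge0 => xy; apply/lat_subr_ge0; rewrite opprK addrC. Qed.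

Lemma lat_leZ2l (a : R) x y : 0 <= a -> le x y -> le (a *: x) (a *: y).
Proof.
case: lattice => _ _ _ geZ _ a_ge0 /lat_subr_ge0 xy; apply/lat_subr_ge0.
by rewrite -scalerBr; apply: geZ.
Qed.

Lemma lat_leZ2r (u : E) (a b : R) : le 0 u -> a <= b -> le (a *: u) (b *: u).
Proof.
move=> u_ge0 ab; apply/lat_subr_ge0; rewrite -scalerBl.
by have := lat_leZ2l (a := b - a) _ u_ge0; rewrite scaler0 subr_ge0; apply.
Qed.

Lemma lat_le_joinl x y : le x (join x y).
Proof. by case: lattice => _ [joinA joinxx] _ _ _; rewrite /lat_le joinA joinxx. Qed.

Lemma lat_le_joinr x y : le y (join x y).
Proof. by case: lattice => joinC _ _ _ _; rewrite joinC; apply: lat_le_joinl. Qed.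

Lemma lat_join_le x y z : le x z -> le y z -> le (join x y) z.
Proof. by case: lattice => _ [joinA _] _ _ _; rewrite /lat_le => xz yz; rewrite -joinA yz xz. Qed.

Lemma lat_joinDr z x y : join (x + z) (y + z) = join x y + z.
Proof.
apply: lat_le_anti.
  by apply: lat_join_le; apply: lat_leD2r; [apply: lat_le_joinl | apply: lat_le_joinr].
have : le (join x y) (join (x + z) (y + z) - z).
  by apply: lat_join_le; rewrite -[X in le X](addrK z);
    apply: lat_leD2r; [apply: lat_le_joinl | apply: lat_le_joinr].
by move/(lat_leD2r z); rewrite subrK.
Qed.

Lemma lat_pos_neg_decomp x : x = join x 0 - join (- x) 0.
Proof.
apply/eqP; rewrite eq_sym subr_eq; apply/eqP.
have := lat_joinDr x (- x) 0; rewrite addNr add0r addrC => <-.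
by case: lattice => joinC _ _ _ _; rewrite joinC.
Qed.

Lemma lat_abs_ge0 x : le 0 (lat_abs join x).
Proof.
have : le 0 ((2 : R) *: lat_abs join x).
  rewrite scalerDl scale1r -(subrr x).
  by apply: lat_leD; [apply: lat_le_joinl | apply: lat_le_joinr].
move/(lat_leZ2l (a := 2^-1)).
by rewrite scaler0 scalerA mulVf ?pnatr_eq0 // scale1r; apply; rewrite invr_ge0.
Qed.

Lemma lat_abs_id x : le 0 x -> lat_abs join x = x.
Proof.
move=> x_ge0; apply: lat_le_anti; last exact: lat_le_joinl.
apply: lat_join_le; first exact: lat_le_refl.
by apply: (lat_le_trans _ x_ge0); rewrite -oppr0; apply: lat_leN2.
Qed.

Lemma lat_norm_le a x : le 0 a -> le (- a) x -> le x a -> `|x| <= `|a|.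
Proof.
case: lattice => _ _ _ _ normle a_ge0 ax xa; apply: normle.
rewrite (lat_abs_id a_ge0); apply: lat_join_le => //.
by rewrite -[a]opprK; apply: lat_leN2.
Qed.

Lemma lat_norm_abs x : `|lat_abs join x| <= `|x|.
Proof.
case: lattice => _ _ _ _ normle; apply: normle.
by rewrite (lat_abs_id (lat_abs_ge0 x)); apply: lat_le_refl.
Qed.

Lemma lat_norm_join0 x : `|join x 0| <= `|x|.
Proof.
apply: le_trans (lat_norm_abs x); apply: lat_norm_le; first exact: lat_abs_ge0.
  apply: (lat_le_trans (y := 0)); last exact: lat_le_joinr.
  by rewrite -oppr0; apply: lat_leN2; apply: lat_abs_ge0.
by apply: lat_join_le; [apply: lat_le_joinl | apply: lat_abs_ge0].
Qed.

Variables (u : E).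
Hypothesis u_ge0 : le 0 u.

Definition order_bounded (a : R) (x : E) : Prop := le ((- a) *: u) x /\ le x (a *: u).

Lemma order_boundedD a b x y :
  order_bounded a x -> order_bounded b y -> order_bounded (a + b) (x + y).
Proof.
by move=> [ax xa] [bx xb]; rewrite /order_bounded opprD !scalerDl; split; apply: lat_leD.
Qed.

Lemma order_boundedN a x : order_bounded a x -> order_bounded a (- x).
Proof.
move=> [ax xa]; split; first by rewrite scaleNr; apply: lat_leN2.
by rewrite -[a *: u]opprK -scaleNr; apply: lat_leN2.
Qed.

Lemma order_bounded_le a b x : a <= b -> order_bounded a x -> order_bounded b x.
Proof.
move=> ab [ax xa]; split; last exact: lat_le_trans xa (lat_leZ2r u_ge0 ab).
by apply: lat_le_trans ax; apply: lat_leZ2r; rewrite // lerN2.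
Qed.

Lemma norm_order_bounded a x : 0 <= a -> order_bounded a x -> `|x| <= a * `|u|.
Proof.
move=> a_ge0 [ax xa]; rewrite -(ger0_norm a_ge0) -normrZ.
apply: lat_norm_le; rewrite -?scaleNr //.
by rewrite -(scaler0 _ a); apply: lat_leZ2l.
Qed.

End LatticeOrder.

Section BoundedOperators.
Variables (R : realType) (E : completeNormedModType R).

Lemma cscale_real (r : R) (p : E * E) : Defs.cscale r%:C p = r *: p.
Proof. by case: p => x y; rewrite /Defs.cscale /= !scale0r subr0 addr0. Qed.

Lemma norm_real_pair (x : E) : `|(x, 0 : E)| = `|x|.
Proof. by rewrite prod_normE /= normr0; apply: max_l. Qed.

Lemma real_pairE (p : E * E) : p.2 = 0 -> p = (p.1, 0).
Proof. by case: p => x y /= ->. Qed.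

Variable S : E * E -> E * E.
Hypothesis S_bounded : bounded_op S.

Lemma bounded_opD p q : S (p + q) = S p + S q.
Proof. by case: S_bounded => [[_ [SD _]] _]; apply: SD. Qed.

Lemma bounded_opZ (r : R) p : S (r *: p) = r *: S p.
Proof. by case: S_bounded => [[_ [_ SZ]] _]; rewrite -!cscale_real SZ. Qed.

Lemma bounded_opB p q : S (p - q) = S p - S q.
Proof. by rewrite bounded_opD -scaleN1r bounded_opZ scaleN1r. Qed.

Lemma bounded_op0 : S 0 = 0.
Proof. by have := bounded_opB 0 0; rewrite !subrr. Qed.

End BoundedOperators.

Section RealBoundedOperators.
Variables (R : realType) (E : completeNormedModType R).

Definition real_bounded (V : E * E -> E * E) : Prop :=
  (forall x, (V (x, 0)).2 = 0) /\
  exists M : R, 0 <= M /\ forall x, `|V (x, 0)| <= M * `|x|.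

Lemma real_bounded_id : real_bounded id.
Proof. by split=> //; exists 1; split=> // x; rewrite norm_real_pair mul1r. Qed.

Lemma real_bounded_comp V W : real_bounded V -> real_bounded W -> real_bounded (W \o V).
Proof.
move=> [Vr [M [M_ge0 VM]]] [Wr [N [N_ge0 WN]]]; split.
  by move=> x /=; rewrite (real_pairE (Vr x)) Wr.
exists (N * M); split=> [|x /=]; first exact: mulr_ge0.
rewrite (real_pairE (Vr x)) -mulrA; apply: le_trans (WN _) _.
by rewrite ler_wpM2l // -norm_real_pair -real_pairE.
Qed.

Lemma real_bounded_add V W : real_bounded V -> real_bounded W -> real_bounded (V \+ W).
Proof.
move=> [Vr [M [M_ge0 VM]]] [Wr [N [N_ge0 WN]]]; split.
  by move=> x /=; rewrite Vr Wr addr0.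
exists (M + N); split=> [|x /=]; first exact: addr_ge0.
by apply: le_trans (ler_normD _ _) _; rewrite mulrDl lerD.
Qed.

Lemma real_bounded_scale (c : R) V : real_bounded V -> real_bounded (fun q => c *: V q).
Proof.
move=> [Vr [M [M_ge0 VM]]]; split=> [x /=|]; first by rewrite Vr scaler0.
exists (`|c| * M); split=> [|x]; first by rewrite mulr_ge0.
by rewrite normrZ -mulrA ler_wpM2l.
Qed.

Lemma real_bounded_iter V n : real_bounded V -> real_bounded (iter n V).
Proof.
move=> Vrb; elim: n => [|n IHn]; first exact: real_bounded_id.
exact: real_bounded_comp IHn Vrb.
Qed.

End RealBoundedOperators.

Section Resolvents.
Variables (R : realType) (E : completeNormedModType R).
Variables (D : set (E * E)) (A : E * E -> E * E).

Lemma resolvent_identity (a b : R) S T :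
  is_resolvent D A a%:C S -> is_resolvent D A b%:C T ->
  forall p, T p = S p + (a - b) *: T (S p).
Proof.
move=> [_ [S_right _]] [T_bounded [_ T_left]] p.
have [Sp_D Sp_eq] := S_right p.
have := T_left _ Sp_D; rewrite cscale_real.
have -> : b *: S p - A (S p) = (b - a) *: S p + (Defs.cscale a%:C (S p) - A (S p)).
  by rewrite cscale_real scalerBl addrA subrK.
rewrite Sp_eq bounded_opD // bounded_opZ // => Tp_eq.
rewrite -{1}Tp_eq addrAC -scalerDl.
have -> : b - a + (a - b) = 0 by ring.
by rewrite scale0r add0r.
Qed.

Hypotheses (A_linear : clinear_on D A) (A_real : real_op D A).

Lemma resolvent_real (mu : R) S : is_resolvent D A mu%:C S -> forall x, (S (x, 0)).2 = 0.
Proof.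
move=> [S_bounded [S_right S_left]] x.
have [Sx_D] := S_right (x, 0); case: (S (x, 0)) Sx_D => y z /= yz_D.
case: A_real => D_real A_realE; have [y_D z_D] := (D_real y z).1 yz_D.
case: A_linear => [[_ DD DZ] [AD AZ]].
have yzE : ((y, z) : E * E) = (y, 0) + Defs.cscale 'i (z, 0).
  rewrite /Defs.cscale /= !scale0r !scaler0 scale1r subr0 !add0r.
  by rewrite -[RHS]/(y + 0, 0 + z) addr0 add0r.
have AyzE : (A (y, z)).2 = (A (z, 0)).1.
  have iz_D : D (Defs.cscale 'i (z, 0)) by apply: DZ.
  rewrite yzE AD // AZ //.
  by rewrite /Defs.cscale /= !A_realE // scaler0 scale1r !add0r.
(* the imaginary part [z] of [S (x, 0)] satisfies [(mu - A) z = 0] *)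
move/(congr1 snd); rewrite cscale_real /= AyzE => z_eq.
have := S_left _ z_D; rewrite cscale_real (real_pairE (A_realE _ z_D)) /=.
have -> : mu *: ((z, 0) : E * E) - ((A (z, 0)).1, 0) = 0.
  by rewrite -[LHS]/(mu *: z - (A (z, 0)).1, mu *: 0 - 0) z_eq scaler0 subrr.
by rewrite bounded_op0 // => /(congr1 fst).
Qed.

Lemma resolvent_real_bounded (mu : R) S : is_resolvent D A mu%:C S -> real_bounded S.
Proof.
move=> S_res; split; first exact: resolvent_real S_res.
case: S_res => [[_ [M SM]] _]; exists `|M|; split=> // x.
by apply: le_trans (SM _) _; rewrite norm_real_pair ler_wpM2r // ler_norm.
Qed.

End Resolvents.

Section Domination.
Variables (R : realType) (E : completeNormedModType R) (join : E -> E -> E).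
Variables (u : E) (phi : E * E -> R[i]).
Hypotheses (lattice : banach_lattice join) (u_ge0 : lat_le join 0 u).
Hypotheses (phi_dual : in_dual phi) (phi_gt0 : strictly_positive join phi).
Local Notation le := (lat_le join).

Definition psi (f : E) : R := complex.Re (phi (f, 0)).

Lemma phi0 : phi 0 = 0.
Proof.
case: phi_dual => phiD _; apply: (@addrI _ (phi 0)).
by rewrite addr0 -phiD addr0.
Qed.

Lemma phi_ge0 f : le 0 f -> phi (f, 0) = (psi f)%:C /\ 0 <= psi f.
Proof.
move=> f_ge0; rewrite /psi; have [->|f_neq0] := eqVneq f 0.
  by rewrite -[(0, 0)]/(0 : E * E) phi0.
have := phi_gt0 f_ge0 (elimN eqP f_neq0); rewrite ltcE /=.
by case: (phi (f, 0)) => a b /= /andP[/eqP -> /ltW].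
Qed.

Lemma psi_le_norm : exists M : R, 0 <= M /\ forall f, psi f <= M * `|f|.
Proof.
case: phi_dual => _ [_ [M phiM]]; exists `|M|; split=> // f.
have := le_trans (normc_ge_Re (phi (f, 0))) (phiM (f, 0)).
rewrite lecR norm_real_pair => psiM; apply: le_trans (ler_norm _) _.
by apply: le_trans psiM _; rewrite ler_wpM2r // ler_norm.
Qed.

Lemma tensor_ge0 f : le 0 f -> Defs.tensor u phi (f, 0) = (psi f *: u, 0).
Proof.
move=> /phi_ge0[phifE _].
by rewrite /Defs.tensor phifE cscale_real -[_ *: (u, 0)]/(psi f *: u, psi f *: 0) scaler0.
Qed.

Definition dominated (S : E * E -> E * E) : Prop :=
  exists K : R, 0 <= K /\ forall f, le 0 f ->
    (S (f, 0)).2 = 0 /\ order_bounded join u (K * psi f) (S (f, 0)).1.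

Lemma dominated_of_succeq S :
  op_succeq join S (opp_op (Defs.tensor u phi)) -> op_succeq join (Defs.tensor u phi) S ->
  dominated S.
Proof.
move=> [c [c_gt0 Sc]] [d [d_gt0 Sd]]; exists (c + d^-1).
split=> [|f f_ge0]; first by rewrite addr_ge0 ?invr_ge0 ?ltW.
have psi_ge0 := (phi_ge0 f_ge0).2.
move: (Sc f f_ge0) (Sd f f_ge0); rewrite /opp_op tensor_ge0 //=.
rewrite oppr0 scaler0 subr0.
move=> -[Sf_real /(lat_subr_ge0 lattice) lowS] [_ /(lat_subr_ge0 lattice) upS].
split=> //; split.
  rewrite scalerN scalerA -scaleNr in lowS; apply: (lat_le_trans lattice _ lowS).
  by apply: lat_leZ2r; rewrite // lerN2 ler_wpM2r // lerDl invr_ge0 ltW.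
have d_inv_ge0 : 0 <= d^-1 by rewrite invr_ge0 ltW.
move/(lat_leZ2l lattice d_inv_ge0): upS; rewrite scalerA mulVf ?gt_eqF // scale1r scalerA => upS.
apply: (lat_le_trans lattice upS); apply: lat_leZ2r => //.
by rewrite ler_wpM2r // lerDr ltW.
Qed.

Lemma succeq_of_dominated S : dominated S ->
  op_succeq join S (opp_op (Defs.tensor u phi)) /\ op_succeq join (Defs.tensor u phi) S.
Proof.
move=> [K [K_ge0 SK]]; have K1_gt0 : 0 < K + 1 by rewrite ltr_wpDl.
split.
  exists (K + 1); split=> // f f_ge0; rewrite /opp_op tensor_ge0 //=.
  have [Sf_real [lowS _]] := SK f f_ge0; have psi_ge0 := (phi_ge0 f_ge0).2.
  rewrite Sf_real oppr0 scaler0 subr0; split=> //; apply/(lat_subr_ge0 lattice).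
  rewrite scalerN scalerA -scaleNr; apply: (lat_le_trans lattice _ lowS).
  by apply: lat_leZ2r; rewrite // lerN2 ler_wpM2r // lerDl.
exists (K + 1)^-1; split=> [|f f_ge0]; first by rewrite invr_gt0.
rewrite tensor_ge0 //=; have [Sf_real [_ upS]] := SK f f_ge0.
rewrite Sf_real scaler0 subr0; split=> //; apply/(lat_subr_ge0 lattice).
have K1inv_ge0 : 0 <= (K + 1)^-1 by rewrite invr_ge0 ltW.
apply: (lat_le_trans lattice (lat_leZ2l lattice K1inv_ge0 upS)).
rewrite scalerA; apply: lat_leZ2r => //; rewrite mulrA ler_piMl ?(phi_ge0 f_ge0).2 //.
by rewrite mulrC ler_pdivrMr // mul1r lerDl.
Qed.

Lemma dominatedD S T : dominated S -> dominated T -> dominated (S \+ T).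
Proof.
move=> [K [K_ge0 SK]] [L [L_ge0 TL]]; exists (K + L); split=> [|f f_ge0].
  exact: addr_ge0.
have [Sf_real Sf_bd] := SK f f_ge0; have [Tf_real Tf_bd] := TL f f_ge0.
by rewrite /= Sf_real Tf_real addr0 mulrDl; split=> //; apply: order_boundedD.
Qed.

Lemma dominated_order_bounded T : bounded_op T -> dominated T ->
  exists C : R, 0 <= C /\ forall h,
    (T (h, 0)).2 = 0 /\ order_bounded join u (C * `|h|) (T (h, 0)).1.
Proof.
move=> T_bounded [K [K_ge0 TK]]; have [M [M_ge0 psiM]] := psi_le_norm.
exists (K * M + K * M); split=> [|h]; first by rewrite addr_ge0 // mulr_ge0.
have hE : ((h, 0) : E * E) = (join h 0, 0) - (join (- h) 0, 0).
  by rewrite -[RHS]/(join h 0 - join (- h) 0, 0 - 0) subrr -lat_pos_neg_decomp.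
have [pos_real pos_bd] := TK _ (lat_le_joinr lattice h 0).
have [neg_real neg_bd] := TK _ (lat_le_joinr lattice (- h) 0).
rewrite hE bounded_opB //=; split; first by rewrite pos_real neg_real subrr.
have h_bd := order_boundedD lattice pos_bd (order_boundedN lattice neg_bd).
apply: (order_bounded_le lattice u_ge0 _ h_bd).
rewrite mulrDl; apply: lerD; rewrite -mulrA ler_wpM2l //; apply: le_trans (psiM _) _.
  by rewrite ler_wpM2l // lat_norm_join0.
by rewrite ler_wpM2l // -(normrN h) lat_norm_join0.
Qed.

Lemma dominated_comp T V S : bounded_op T -> dominated T -> real_bounded V ->
  dominated S -> dominated (T \o V \o S).
Proof.
move=> T_bounded /(dominated_order_bounded T_bounded) [C [C_ge0 TC]].
move=> [Vr [M [M_ge0 VM]]] [K [K_ge0 SK]].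
exists (C * (M * (K * `|u|))); split=> [|f f_ge0]; first by rewrite !mulr_ge0.
have [Sf_real Sf_bd] := SK f f_ge0; have psi_ge0 := (phi_ge0 f_ge0).2.
rewrite /= (real_pairE Sf_real) (real_pairE (Vr _)).
have [TVSf_real TVSf_bd] := TC (V ((S (f, 0)).1, 0)).1; split=> //.
apply: (order_bounded_le lattice u_ge0 _ TVSf_bd).
have Sf_norm := norm_order_bounded lattice u_ge0 (mulr_ge0 K_ge0 psi_ge0) Sf_bd.
have VSf_norm : `|(V ((S (f, 0)).1, 0)).1| <= M * (K * psi f * `|u|).
  rewrite -norm_real_pair -(real_pairE (Vr _)).
  exact: le_trans (VM _) (ler_wpM2l M_ge0 Sf_norm).
apply: le_trans (ler_wpM2l C_ge0 VSf_norm) _.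
by rewrite (_ : C * (M * (K * `|u|)) * psi f = C * (M * (K * psi f * `|u|))) //; ring.
Qed.

End Domination.

Section ResolventPowers.
Variables (R : realType) (E : completeNormedModType R) (join : E -> E -> E).
Variables (D : set (E * E)) (A : E * E -> E * E) (u : E) (phi : E * E -> R[i]).
Variables (mu0 mu : R) (B0 B : E * E -> E * E).
Hypotheses (lattice : banach_lattice join) (u_ge0 : lat_le join 0 u).
Hypotheses (phi_dual : in_dual phi) (phi_gt0 : strictly_positive join phi).
Hypotheses (A_linear : clinear_on D A) (A_real : real_op D A).
Hypotheses (B0_res : is_resolvent D A mu0%:C B0) (B_res : is_resolvent D A mu%:C B).

Let k := mu0 - mu.
Let V q := q + k *: B q.

Lemma resolventE_l p : B p = B0 (V p).
Proof.
have B0_bounded : bounded_op B0 by case: B0_res.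
rewrite /V bounded_opD // bounded_opZ // (resolvent_identity B_res B0_res p).
rewrite -addrA -scalerDl (_ : mu - mu0 + k = 0) ?scale0r ?addr0 //.
by rewrite /k addrC subrKA subrr.
Qed.

Lemma resolventE_r p : B p = V (B0 p).
Proof. exact: (resolvent_identity B0_res B_res p). Qed.

Lemma resolvent1E : B = B0 \+ (B0 \o (fun q => k *: V q) \o B0).
Proof.
apply/funext=> p; have B0_bounded : bounded_op B0 by case: B0_res.
by rewrite [LHS]resolventE_l /V bounded_opD // [B p]resolventE_r.
Qed.

Lemma resolventSSE n : iter n.+2 B = B0 \o (V \o iter n B \o V) \o B0.
Proof. by apply/funext=> p; rewrite iterS iterSr resolventE_l [B p]resolventE_r. Qed.

Lemma dominated_resolvent_iter n : dominated join u phi B0 -> (0 < n)%N ->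
  dominated join u phi (iter n B).
Proof.
move=> B0_dom; have B0_bounded : bounded_op B0 by case: B0_res.
have B_rb := resolvent_real_bounded A_linear A_real B_res.
have V_rb : real_bounded V :=
  real_bounded_add (@real_bounded_id R E) (real_bounded_scale k B_rb).
case: n => [//|[_|n _]].
  rewrite (_ : iter 1 B = B) // resolvent1E.
  apply: dominatedD => //; apply: dominated_comp => //; exact: real_bounded_scale.
rewrite resolventSSE; apply: dominated_comp => //.
exact: real_bounded_comp (real_bounded_comp V_rb (real_bounded_iter n B_rb)) V_rb.
Qed.

End ResolventPowers.

Theorem proposition4p1 (R : realType) (E : completeNormedModType R)
  (join : E -> E -> E) (D : set (E * E)) (A : E * E -> E * E)
  (u : E) (phi : E * E -> R[i]) :
  banach_lattice join ->
  clinear_on D A -> densely_defined D -> closed_op D A -> real_op D A ->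
  lat_le join 0 u ->
  in_dual phi -> strictly_positive join phi ->
  (exists (mu0 : R) (B0 : E * E -> E * E),
     is_resolvent D A mu0%:C B0 /\
     op_succeq join B0 (opp_op (tensor u phi)) /\
     op_succeq join (tensor u phi) B0) ->
  forall (mu : R) (B : E * E -> E * E), is_resolvent D A mu%:C B ->
  forall n : nat, (0 < n)%N ->
    op_succeq join (iter n B) (opp_op (tensor u phi)) /\
    op_succeq join (tensor u phi) (iter n B).
Proof.
move=> lattice A_linear _ _ A_real u_ge0 phi_dual phi_gt0 [mu0 [B0 [B0_res [lowB0 upB0]]]].
move=> mu B B_res n n_gt0.
have B0_dom := dominated_of_succeq lattice u_ge0 phi_dual phi_gt0 lowB0 upB0.
apply: succeq_of_dominated => //.
exact: (dominated_resolvent_iter lattice u_ge0 phi_dual phi_gt0 A_linear A_real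
  B0_res B_res B0_dom n_gt0).
Qed.
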